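(* Let $l$ and $m$ be positive integers, let $n=2^m-1$, let $\pi : (\mathbb Z_2^m)^* \to \mathbb Z_{n}$ be a bijection, let $q\equiv 1\pmod{2n}$ be a prime power, let $\rho$ be a primitive element of $\mathbb F_q$, and let $\Gamma = \operatorname{Cay}(G_{l,m,q},S(\pi))$. Let $g\in(\mathbb Z_2^m)^*$ with $\pi(g)\neq 1$, and let $v=(0,0,0)$ and $w=(0,g,\rho)$ be vertices of $\Gamma$. Then the number of common neighbours of $v$ and $w$ is $$2 + \sum_{\substack{h \in (\mathbb Z_2^m)^* \\ h \ne g}} c^{n}_q\big(\pi(h)-1,\ \pi(h+g)-1\big).$$
   Context: For an additive group $A$, $A^*=A\setminus\{0\}$. $G_{l,m,q} = \mathbb Z_l \oplus \mathbb Z_2^m \oplus \mathbb F_q$. $S_0 = \{(g,0) : g \in (\mathbb Z_l \oplus \mathbb Z_2^m)^*\}$; $S_{z,\pi} = \{(0,z,\rho^j) : j\in\mathbb Z,\ j \equiv \pi(z) \pmod{n}\}$ for $z\in(\mathbb Z_2^m)^*$; $S(\pi) = S_0 \cup \bigcup_z S_{z,\pi}$. $\operatorname{Cay}(G_{l,m,q},S(\pi))$ has vertex set $G_{l,m,q}$, $x\sim y$ iff $y-x\in S(\pi)$. Write $q=2nr+1$; for $i\in\mathbb Z_n$, $C^n_q(i) = \{\rho^{nj+i} : 0\le j\le 2r-1\}$; for $a,b\in\mathbb Z_n$, $c^n_q(a,b) = |(C^n_q(a)+1)\cap C^n_q(b)|$ (indices in $\mathbb Z_n$). *)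

From HB Require Import structures.
From mathcomp Require Import all_boot all_order all_algebra.
Set Implicit Arguments. Unset Strict Implicit. Unset Printing Implicit Defensive.
Import Order.TTheory GRing.Theory Num.Theory.
Local Open Scope ring_scope.

(* Z_l for l >= 1 is represented by 'I_(l.-1).+1 (convertible to 'I_l when l > 0),
   which carries the canonical additive group structure of Z/lZ. *)
Definition Zl (l : nat) := 'I_(l.-1).+1.

Definition Z2m (m : nat) := 'rV['Z_2]_m.

Definition Gq (l m : nat) (F : finFieldType) := (Zl l * Z2m m * F)%type.

Section Cayley.
Variables (l m : nat) (F : finFieldType).
Variables (pi : Z2m m -> nat) (n : nat) (rho : F).

Definition S0 (x : Gq l m F) : Prop := x.1 != 0 /\ x.2 = 0.

Definition Szpi (z : Z2m m) (x : Gq l m F) : Prop :=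
  exists j : int, (j %% (n : int))%Z = (pi z)%:Z /\ x = ((0, z), rho ^ j).

Definition Spi (x : Gq l m F) : Prop := S0 x \/ exists z : Z2m m, z != 0 /\ Szpi z x.

Definition cay_adj (x y : Gq l m F) : Prop := Spi (y - x).

Definition common_nbr (v w x : Gq l m F) : Prop := cay_adj v x /\ cay_adj w x.
End Cayley.

(* cyclotomic classes: q = 2nr+1, C^n_q(i) = {rho^(nj+i) : 0 <= j <= 2r-1} *)
Definition cyc_class (F : finFieldType) (rho : F) (n i : nat) : {set F} :=
  [set rho ^+ (n * j + i) | j : 'I_(2 * ((#|F|.-1) %/ (2 * n)))].

Definition cyc_num (F : finFieldType) (rho : F) (n a b : nat) : nat :=
  #|[set y + 1 | y in cyc_class rho n a] :&: cyc_class rho n b|.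

From HB Require Import structures.
From mathcomp Require Import all_boot all_order all_algebra.
From mathcomp Require Import finfield.
Import GRing.Theory Num.Theory.
Set Implicit Arguments. Unset Strict Implicit.
Local Open Scope ring_scope.

(* A common neighbour x of v = 0 and w = (0, g, rho) has x and x - w in S(pi); as
   rho <> 0, they are not both in S_0. Since -1 = rho^(nr) with q - 1 = 2nr, both
   rho and -rho lie in C(1), so x in S_0 forces x - w = (0, z1, -rho), and x - w in
   S_0 forces x = (0, z1, rho), where pi(z1) = 1; pi(g) <> 1 makes both of these
   genuine neighbours. Otherwise x = (0, h + g, rho t), and because multiplication
   by rho shifts C(i) to C(i + 1), x is a common neighbour iff
   t in (C(pi(h) - 1) + 1) :&: C(pi(h + g) - 1): for fixed h there are
   c(pi(h) - 1, pi(h + g) - 1) such t. *)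

Lemma prim_root_neq0 (R : nzRingType) (N : nat) (z : R) :
  N.-primitive_root z -> z != 0.
Proof. by move=> prim_z; rewrite (prim_root_eq0 prim_z) -lt0n (prim_order_gt0 prim_z). Qed.

Lemma prim_root_half_order (F : fieldType) (N : nat) (z : F) :
  N.-primitive_root z -> (2 %| N)%N -> z ^+ (N %/ 2) = -1.
Proof.
move=> prim_z /(dvdn_prim_root prim_z) prim2.
have /eqP := prim_expr_order prim2; rewrite sqrf_eq1 => /orP[/eqP z1 | /eqP //].
by have := eq_prim_root_expr prim2 1 0; rewrite expr0 expr1 z1 eqxx.
Qed.

Lemma prim_root_exprz (F : fieldType) (N : nat) (z : F) (j : int) :
  N.-primitive_root z -> z ^ j = z ^+ `|(j %% N)%Z|%N.
Proof.
move=> prim_z; rewrite {1}(divz_eq j N) expfzDr ?(prim_root_neq0 prim_z) //.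
rewrite -exprz_exp exprzAC -exprnP (prim_expr_order prim_z) exp1rz mul1r exprnP abszE.
by rewrite ger0_norm // modz_ge0 // lt0r_neq0 // ltz_nat (prim_order_gt0 prim_z).
Qed.

Lemma finField_prim_root_expr (F : finFieldType) (rho : F) (f : F) :
  (#|F|.-1).-primitive_root rho -> f != 0 -> exists k, f = rho ^+ k.
Proof.
move=> prim_rho f_neq0; suff /(prim_rootP prim_rho)[k ->] : f ^+ #|F|.-1 = 1 by exists k.
apply: (mulIf f_neq0); rewrite mul1r -exprSr prednK ?expf_card //.
exact: ltnW (card_finNzRing_gt1 F).
Qed.

Lemma Z2m_oppr m (v : Z2m m) : - v = v.
Proof. by rewrite -scaleN1r (_ : -1 = 1 :> 'Z_2) ?scale1r //; apply/val_inj. Qed.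

Lemma Z2m_addr_eq0 m (u v : Z2m m) : (u + v == 0) = (u == v).
Proof. by rewrite addr_eq0 Z2m_oppr. Qed.

Lemma card_dep_pairs (T U : finType) (P : pred T) (E : T -> {set U}) :
  #|[set p : T * U | P p.1 && (p.2 \in E p.1)]| = (\sum_(x | P x) #|E x|)%N.
Proof.
rewrite (eq_bigr (fun x => \sum_(y in E x) 1)%N) => [|x _]; last by rewrite sum1_card.
by rewrite pair_big_dep sum1dep_card.
Qed.

Section Cyclotomy.
Variables (F : finFieldType) (rho : F) (n : nat).
Hypotheses (n_gt0 : (0 < n)%N) (dvd_2n_order : (2 * n %| #|F|.-1)%N)
  (rho_prim : (#|F|.-1).-primitive_root rho).

Local Notation N := #|F|.-1.
Local Notation C := (cyc_class rho n).

Let order_gt0 : (0 < N)%N := prim_order_gt0 rho_prim.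
Let rho_neq0 : rho != 0 := prim_root_neq0 rho_prim.

Let dvd_n_order : (n %| N)%N.
Proof. exact: dvdn_trans (dvdn_mull 2 (dvdnn n)) dvd_2n_order. Qed.

Lemma mem_cyc_class_expr k i : (i < n)%N -> (rho ^+ k \in C i) = (k %% n == i)%N.
Proof.
move=> lt_i_n; apply/imsetP/eqP => [[j _ /eqP] | <-].
  rewrite (eq_prim_root_expr rho_prim) => /eqP/(congr1 (modn^~ n)).
  by rewrite 2!(modn_dvdm _ dvd_n_order) mulnC modnMDl (modn_small lt_i_n) => ->.
have lt_j : ((k %% N) %/ n < 2 * (N %/ (2 * n)))%N.
  by rewrite ltn_divLR // mulnAC mulnC divnK // ltn_pmod.
exists (Ordinal lt_j) => //=.
by rewrite -(prim_expr_mod rho_prim k) {1}(divn_eq (k %% N) n) mulnC (modn_dvdm _ dvd_n_order).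
Qed.

Lemma cyc_class0 i : 0 \notin C i.
Proof. by apply/imsetP => -[j _ /esym/eqP]; rewrite expf_eq0 (negPf rho_neq0) andbF. Qed.

Lemma mem_cyc_class_mulr i t :
  (i < n)%N -> (rho * t \in C i) = (t \in C ((i + n - 1) %% n)).
Proof.
move=> lt_i_n; have [->|/(finField_prim_root_expr rho_prim)[k ->]] := eqVneq t 0.
  by rewrite mulr0 !(negPf (cyc_class0 _)).
rewrite -exprS !mem_cyc_class_expr ?ltn_pmod // -{1}(modn_small lt_i_n).
by rewrite -[RHS](eqn_modDr 1) subnK ?addn1 ?modnDr // ltn_addl.
Qed.

Lemma mem_cyc_class_rho i : (i < n)%N -> (rho \in C i) = (i == 1 %% n)%N.
Proof. by move=> lt_i_n; rewrite -[rho]expr1 mem_cyc_class_expr // eq_sym. Qed.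

Lemma mem_cyc_class_Nrho i : (i < n)%N -> (- rho \in C i) = (i == 1 %% n)%N.
Proof.
move=> lt_i_n; have dvd2 : (2 %| N)%N := dvdn_trans (dvdn_mulr n (dvdnn 2)) dvd_2n_order.
have half : (N %/ 2 = N %/ (2 * n) * n)%N.
  by rewrite -{1}(divnK dvd_2n_order) mulnCA mulKn.
rewrite -mulN1r -(prim_root_half_order rho_prim dvd2) -exprSr mem_cyc_class_expr //.
by rewrite half -addn1 modnMDl eq_sym.
Qed.

Lemma cyc_classP i f : (i < n)%N ->
  reflect (exists j : int, (j %% n)%Z = i /\ f = rho ^ j) (f \in C i).
Proof.
move=> lt_i_n; apply: (iffP idP) => [/imsetP[j _ ->] | [j [ji ->]]].
  by exists (n * j + i)%N; rewrite modz_nat mulnC modnMDl (modn_small lt_i_n); split.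
rewrite (prim_root_exprz _ rho_prim) mem_cyc_class_expr // -eqz_nat -modz_nat.
rewrite abszE ger0_norm -?ji ?modz_ge0 ?eqz_nat -?lt0n //.
by rewrite eqz_mod_dvd -opprB {1}(divz_eq j N) addrK rpredN dvdz_mull.
Qed.

Section CommonNeighbours.
Variables (l m : nat) (pi : Z2m m -> nat).
Hypothesis pi_lt : forall z : Z2m m, z != 0 -> (pi z < n)%N.

Definition in_Spi (x : Gq l m F) : bool :=
  (x.1 != 0) && (x.2 == 0) || [&& x.1.1 == 0, x.1.2 != 0 & x.2 \in C (pi x.1.2)].

Lemma SpiP x : reflect (Spi pi n rho x) (in_Spi x).
Proof.
case: x => [[a z] f]; rewrite /in_Spi /Spi /S0 /Szpi /=.
apply: (iffP orP) => [[/andP[az0 /eqP->] | /and3P[/eqP-> z0 fC]] | ].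
- by left.
- by right; exists z; split=> //; have /(cyc_classP _ (pi_lt z0))[j [ji ->]] := fC; exists j.
- case=> [[-> ->] | [z' [z0 [j [ji [-> -> ->]]]]]]; first by left; rewrite eqxx andbT.
  right; rewrite eqxx z0; apply/(cyc_classP _ (pi_lt z0)).
  by exists j.
Qed.

Variables (g z1 : Z2m m).
Hypotheses (pi_inj : {in [pred z : Z2m m | z != 0] &, injective pi})
  (z1_neq0 : z1 != 0) (pi_z1 : pi z1 = (1 %% n)%N) (pi_g : pi g != (1 %% n)%N).

Let z1_neq_g : z1 != g.
Proof. by apply: contraNneq pi_g => <-; rewrite pi_z1. Qed.

Let pi_eq_z1 z : z != 0 -> (pi z == (1 %% n)%N) = (z == z1).
Proof. by move=> z0; rewrite -pi_z1; apply/eqP/eqP => [|->//]; apply: pi_inj. Qed.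

Let in_Spi0 (y : Zl l * Z2m m) : in_Spi (y, 0) = (y != 0).
Proof. by rewrite /in_Spi /= eqxx andbT (negPf (cyc_class0 _)) !andbF orbF. Qed.

Let in_Spi_neq0 (y : Zl l * Z2m m) f :
  f != 0 -> in_Spi (y, f) = [&& y.1 == 0, y.2 != 0 & f \in C (pi y.2)].
Proof. by move=> f0; rewrite /in_Spi /= (negPf f0) andbF. Qed.

Let mem_cyc_class_rho_pi z : (z != 0) && (rho \in C (pi z)) = (z == z1).
Proof.
have [->|z0] := eqVneq z 0; first by rewrite eq_sym (negPf z1_neq0).
by rewrite mem_cyc_class_rho ?pi_lt ?pi_eq_z1.
Qed.

Let mem_cyc_class_Nrho_pi z : (z != 0) && (- rho \in C (pi z)) = (z == z1).
Proof.
have [->|z0] := eqVneq z 0; first by rewrite eq_sym (negPf z1_neq0).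
by rewrite mem_cyc_class_Nrho ?pi_lt ?pi_eq_z1.
Qed.

Local Notation w := (((0, g), rho) : Gq l m F).

Definition common_nbr_Sz (x : Gq l m F) : bool :=
  [&& x.1.1 == 0, x.1.2 != 0, x.1.2 != g, x.2 \in C (pi x.1.2)
    & x.2 - rho \in C (pi (x.1.2 - g))].

Lemma common_nbrE x : in_Spi x && in_Spi (x - w) =
  [|| x == ((0, z1 + g), 0), x == ((0, z1), rho) | common_nbr_Sz x].
Proof.
case: x => [[a z] f]; rewrite /common_nbr_Sz /=.
have -> : ((a, z), f) - w = ((a - 0, z - g), f - rho) by [].
rewrite subr0.
have [->|f0] := eqVneq f 0.
  rewrite in_Spi0 sub0r in_Spi_neq0 ?oppr_eq0 ?rho_neq0 //= mem_cyc_class_Nrho_pi.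
  rewrite (negPf (cyc_class0 _)) !andbF orbF !xpair_eqE eqxx andbT [0 == rho]eq_sym.
  rewrite (negPf rho_neq0) andbF orbF subr_eq.
  have [->|] := eqVneq z (z1 + g); last by rewrite !andbF.
  by rewrite Z2m_addr_eq0 (negPf z1_neq_g) andbF /= andbT.
have [->|fr] := eqVneq f rho.
  rewrite subrr in_Spi0 in_Spi_neq0 ?rho_neq0 //= mem_cyc_class_rho_pi.
  rewrite (negPf (cyc_class0 _)) !andbF orbF !xpair_eqE eqxx andbT (negPf rho_neq0) andbF /=.
  have [->|] := eqVneq z z1; last by rewrite !andbF.
  by rewrite subr_eq0 (negPf z1_neq_g) andbF /= !andbT.
rewrite in_Spi_neq0 // in_Spi_neq0 ?subr_eq0 //= !xpair_eqE (negPf f0) (negPf fr) !andbF /=.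
by case: (a == 0); case: (z == 0); case: (z == g); case: (f \in _); case: (_ - _ \in _).
Qed.

Lemma common_nbr_Sz_shift h t : common_nbr_Sz ((0, h + g), rho * t) =
  [&& h != 0, h != g & t \in [set y + 1 | y in C ((pi h + n - 1) %% n)]
                            :&: C ((pi (h + g) + n - 1) %% n)].
Proof.
rewrite /common_nbr_Sz /= addrK Z2m_addr_eq0 -(subr_eq0 (h + g)) addrK.
have [->|h0] := eqVneq h 0; first by rewrite /= andbF.
have [->|hg] := eqVneq h g; first by [].
rewrite (_ : rho * t - rho = rho * (t - 1)); last by rewrite mulrBr mulr1.
rewrite !mem_cyc_class_mulr ?pi_lt ?Z2m_addr_eq0 // in_setI /= andbC.
by rewrite (can2_imset_pre _ (addrK 1) (subrK 1)) inE.
Qed.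

Lemma card_common_nbr_Sz : #|[set x | common_nbr_Sz x]| =
  (\sum_(h : Z2m m | (h != 0%R) && (h != g))
     cyc_num rho n ((pi h + n - 1) %% n) ((pi (h + g)%R + n - 1) %% n))%N.
Proof.
pose shift (p : Z2m m * F) : Gq l m F := ((0, p.1 + g), rho * p.2).
have shift_inj : injective shift.
  by move=> [h t] [h' t'] [/addIr-> /(mulfI rho_neq0)->].
rewrite -card_dep_pairs -(card_imset _ shift_inj); apply: eq_card => -[[a z] f].
rewrite inE; apply/idP/imsetP => [x_both | [[h t] hP ->]]; last first.
  by move: hP; rewrite inE common_nbr_Sz_shift andbA.
have a0 : a = 0 by case/andP: x_both => /eqP.
have x_shift : ((a, z), f) = ((0, z - g + g), rho * (f / rho)).
  by rewrite a0 subrK mulrC divfK ?rho_neq0.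
exists (z - g, f / rho); last exact: x_shift.
by rewrite inE /= -andbA -common_nbr_Sz_shift -x_shift.
Qed.

Lemma card_common_nbrs : #|[set x | in_Spi x && in_Spi (x - w)]| =
  (2 + \sum_(h : Z2m m | (h != 0%R) && (h != g))
     cyc_num rho n ((pi h + n - 1) %% n) ((pi (h + g)%R + n - 1) %% n))%N.
Proof.
have -> : [set x | in_Spi x && in_Spi (x - w)] =
    ((0, z1 + g), 0) |: (((0, z1), rho) |: [set x | common_nbr_Sz x]).
  by apply/setP => x; rewrite !inE common_nbrE.
rewrite !cardsU1 card_common_nbr_Sz !inE /common_nbr_Sz /= subrr.
by rewrite !(negPf (cyc_class0 _)) !andbF !xpair_eqE [0 == rho]eq_sym (negPf rho_neq0) !andbF.
Qed.

End CommonNeighbours.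

End Cyclotomy.

Theorem proposition2p4 (l m : nat) (F : finFieldType) (pi : Z2m m -> nat)
  (rho : F) (g : Z2m m) :
  (0 < l)%N -> (0 < m)%N ->
  let n := (2 ^ m - 1)%N in
  (* pi restricted to (Z_2^m)^* is a bijection onto Z_n = {0,...,n-1} *)
  (forall z : Z2m m, z != 0 -> (pi z < n)%N) ->
  {in [pred z : Z2m m | z != 0] &, injective pi} ->
  (forall i : nat, (i < n)%N -> exists2 z : Z2m m, z != 0 & pi z = i) ->
  (* q = #|F| = 1 mod 2n; F is the finite field F_q *)
  (#|F| %% (2 * n) = 1)%N ->
  (* rho is a primitive element of F_q *)
  (#|F|.-1).-primitive_root rho ->
  g != 0 -> pi g != (1 %% n)%N ->
  exists2 A : {set Gq l m F},
    (forall x, x \in A <-> common_nbr pi n rho (0, 0, 0) ((0, g), rho) x) &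
    #|A| = (2 + \sum_(h : Z2m m | (h != 0%R) && (h != g))
              cyc_num rho n ((pi h + n - 1) %% n) ((pi (h + g)%R + n - 1) %% n))%N.
Proof.
move=> _ m_gt0 n pi_lt pi_inj pi_onto q_mod rho_prim _ pi_g.
have n_gt0 : (0 < n)%N by rewrite subn_gt0 -{1}(expn0 2) ltn_exp2l.
have dvd_2n_order : (2 * n %| #|F|.-1)%N.
  by apply/dvdnP; exists (#|F| %/ (2 * n))%N; rewrite {1}(divn_eq #|F| (2 * n)) q_mod addn1.
have [z1 z1_neq0 pi_z1] := pi_onto _ (ltn_pmod 1 n_gt0).
have adjP := @SpiP _ _ _ n_gt0 dvd_2n_order rho_prim l _ _ pi_lt.
(* The cast makes [0 : Zl l] elaborate exactly as in the statement. *)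
exists [set x | in_Spi rho n pi x && in_Spi rho n pi (x - (((0, g), rho) : Gq l m F))].
  move=> x; rewrite inE /common_nbr /cay_adj subr0.
  by split=> [/andP[/adjP ? /adjP ?] | [/adjP ? /adjP ?]]; last apply/andP.
exact: (card_common_nbrs n_gt0 dvd_2n_order rho_prim l pi_lt pi_inj z1_neq0 pi_z1 pi_g).
Qed.
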